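(* Let $f:\mathrm{GF}(p^m)^n\to\mathrm{GF}(p^m)$ be a polynomial function and $I=\{i_1,\ldots,i_k\}\subseteq\{1,\ldots,n\}$. Write $t_I=x_{i_1}\cdots x_{i_k}$ and $f = t_I f_{S(I)} + r$ where every monomial of $r$ misses at least one variable $x_i$ with $i\in I$. Let $\mathbf{v}$ denote the $n$-tuple with $1$ in positions $i_1,\ldots,i_k$ and the indeterminates $x_j$ in the other positions, and $\mathbf{u}$ the $n$-tuple with $0$ in positions $i_1,\ldots,i_k$ and indeterminates elsewhere. Define \[ f_I = \sum_{(b_1,\ldots,b_k)\in\{0,1\}^k} (-1)^{k-(b_1+\cdots+b_k)} f|_{x_{i_1}=b_1,\ldots,x_{i_k}=b_k}, \] a function of the variables $x_j$, $j\notin I$. Then \[ f_I = (\Delta^{(k)}_{\mathbf{e}_{i_1},\ldots,\mathbf{e}_{i_k}} f)(\mathbf{u}) = f_{S(I)}(\mathbf{v}). \]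
   Context: Every function $\mathrm{GF}(q)^n\to\mathrm{GF}(q)$ is represented uniquely by a polynomial of degree at most $q-1$ in each variable; the decomposition $f=t_If_{S(I)}+r$ refers to this representative ($f_{S(I)}$ may involve the variables with index in $I$). $\mathbf e_i$ is the $i$-th standard basis vector, $(\Delta_{\mathbf{a}} f)(\mathbf{x}) = f(\mathbf{x}+\mathbf{a})-f(\mathbf{x})$, and $\Delta^{(k)}_{\mathbf{a}_1,\ldots,\mathbf{a}_k}=\Delta_{\mathbf{a}_1}\cdots\Delta_{\mathbf{a}_k}$. *)

From HB Require Import structures.
From mathcomp Require Import all_boot all_order all_algebra all_field.
Set Implicit Arguments. Unset Strict Implicit. Unset Printing Implicit Defensive.
Import GRing.Theory.
Local Open Scope ring_scope.

(* A function GF(q)^n -> GF(q) is a map 'rV[F]_n -> F, F a finite field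
   (every finite field is GF(p^m)).  Its reduced polynomial representative
   is given by a coefficient table indexed by exponent vectors
   e : 'I_n -> {0,...,q-1}, with q = #|F|. *)
Definition expvec (F : finFieldType) (n : nat) := {ffun 'I_n -> 'I_#|F|}.

Definition peval (F : finFieldType) (n : nat) (c : {ffun expvec F n -> F})
  (x : 'rV[F]_n) : F :=
  \sum_(e : expvec F n) c e * \prod_(i < n) x ord0 i ^+ (e i).

(* f_{S(I)} : f = t_I f_{S(I)} + r; f_{S(I)} collects the monomials of the
   representative divisible by t_I = prod_{i in I} x_i, divided by t_I. *)
Definition fS (F : finFieldType) (n : nat) (c : {ffun expvec F n -> F})
  (I : {set 'I_n}) (x : 'rV[F]_n) : F :=
  \sum_(e : expvec F n | [forall i in I, 0 < e i]%N)
     c e * \prod_(i < n) x ord0 i ^+ (e i - (i \in I))%N.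

Definition vvec (F : finFieldType) (n : nat) (I : {set 'I_n}) (x : 'rV[F]_n)
  : 'rV[F]_n := \row_j (if j \in I then 1 else x ord0 j).
Definition uvec (F : finFieldType) (n : nat) (I : {set 'I_n}) (x : 'rV[F]_n)
  : 'rV[F]_n := \row_j (if j \in I then 0 else x ord0 j).

Definition subst01 (F : finFieldType) (n : nat) (I J : {set 'I_n})
  (x : 'rV[F]_n) : 'rV[F]_n :=
  \row_j (if j \in I then (if j \in J then 1 else 0) else x ord0 j).

(* f_I = sum_{b in {0,1}^k} (-1)^{k - sum b} f|_{x_{i_l} = b_l};
   a vector b in {0,1}^k is encoded by the subset J = {i_l | b_l = 1} of I. *)
Definition fI (F : finFieldType) (n : nat) (f : 'rV[F]_n -> F)
  (I : {set 'I_n}) (x : 'rV[F]_n) : F :=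
  \sum_(J in powerset I) (-1) ^+ (#|I| - #|J|)%N * f (subst01 I J x).

Definition evec (F : finFieldType) (n : nat) (i : 'I_n) : 'rV[F]_n :=
  delta_mx 0 i.

Definition Delta (F : finFieldType) (n : nat) (a : 'rV[F]_n)
  (f : 'rV[F]_n -> F) : 'rV[F]_n -> F := fun x => f (x + a) - f x.

Definition DeltaI (F : finFieldType) (n : nat) (I : {set 'I_n})
  (f : 'rV[F]_n -> F) : 'rV[F]_n -> F :=
  foldr (fun i g => Delta (evec F i) g) f (enum I).

(* All three expressions are linear in f, so it suffices to treat a monomial
   x^e.  Both the iterated difference at u and the signed sum over the 0/1
   substitutions factor over the coordinates: a variable x_i with i in I
   contributes 1^e_i - 0^e_i, which is 1 if x_i divides x^e and 0 otherwise,
   and the other variables are left untouched.  This is exactly the value of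
   the t_I-divisible part of x^e, divided by t_I, at v. *)
From HB Require Import structures.
From mathcomp Require Import all_boot all_order all_algebra all_field.
Set Implicit Arguments. Unset Strict Implicit. Unset Printing Implicit Defensive.
Import GRing.Theory.
Local Open Scope ring_scope.

Section IteratedDifference.
Variables (F : finFieldType) (n : nat).
Local Notation Deltas := (foldr (fun i g => Delta (evec F i) g)).

Lemma Deltas_sum (E : finType) (s : seq 'I_n) (f : 'rV[F]_n -> F)
    (h : E -> 'rV[F]_n -> F) (coef : E -> F) :
  (forall y, f y = \sum_e coef e * h e y) ->
  forall y, Deltas f s y = \sum_e coef e * Deltas (h e) s y.
Proof.
move=> hf; elim: s => [|i s IHs] y /=; first exact: hf.
by rewrite /Delta !IHs -sumrB; apply: eq_bigr => e _; rewrite mulrBr.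
Qed.

Lemma Deltas_prod (s : seq 'I_n) (g : 'I_n -> F -> F) : uniq s ->
  forall y, Deltas (fun y => \prod_i g i (y ord0 i)) s y =
  \prod_i (if i \in s then g i (y ord0 i + 1) - g i (y ord0 i)
           else g i (y ord0 i)).
Proof.
elim: s => [_ y | a s IHs /andP[a_s s_uniq] y] /=.
  by apply: eq_bigr => i _.
rewrite /Delta !IHs // (bigD1 a) //= [X in _ - X](bigD1 a) //=.
rewrite [RHS](bigD1 a) //=.
rewrite (negbTE a_s) inE eqxx /evec !mxE eqxx /=.
under eq_bigr => i i_a do rewrite !mxE (negbTE i_a) addr0.
rewrite -mulrBl; congr (_ * _); apply: eq_bigr => i i_a.
by rewrite inE (negbTE i_a).
Qed.

End IteratedDifference.

Lemma sum_powerset_signed_prod (T : finType) (R : comPzRingType)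
    (z w : T -> R) (I : {set T}) :
  \sum_(J in powerset I) (-1) ^+ (#|I| - #|J|) *
     \prod_i (if i \in I then (if i \in J then 1 else z i) else w i)
  = \prod_i (if i \in I then 1 - z i else w i).
Proof.
transitivity (\prod_i ((if i \in I then 1 else 0) +
                       (if i \in I then - z i else w i))); last first.
  by apply: eq_bigr => i _; case: (i \in I); rewrite ?add0r.
rewrite bigA_distr [RHS](bigID (mem (powerset I))) /=.
rewrite [X in _ = _ + X]big1 ?addr0; last first.
  move=> J; rewrite powersetE => /subsetPn[i iJ iNI].
  by rewrite (bigD1 i) //= iJ (negbTE iNI) mul0r.
apply: eq_bigr => J; rewrite powersetE => JI.
transitivity (\prod_i ((if i \in I :\: J then -1 else 1) *
   (if i \in I then (if i \in J then 1 else z i) else w i))); last first.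
  apply: eq_bigr => i _; rewrite inE.
  case iJ: (i \in J) => /=; first by rewrite (subsetP JI) // mul1r.
  by case: (i \in I); rewrite ?mulN1r ?mul1r.
by rewrite big_split /= -big_mkcond /= prodr_const cardsD (setIidPr JI).
Qed.

Lemma subr_expr0n (R : pzRingType) (k : nat) : 1 - 0 ^+ k = (0 < k)%:R :> R.
Proof. by rewrite expr0n eqn0Ngt; case: (0 < k)%N; rewrite ?subrr ?subr0. Qed.

Section MonomialExpansion.
Variables (F : finFieldType) (n : nat) (c : {ffun expvec F n -> F}).
Variables (I : {set 'I_n}) (x : 'rV[F]_n).

Definition reduced_monomial (e : expvec F n) : F :=
  \prod_i (if i \in I then (0 < e i)%:R else x ord0 i ^+ e i).

Lemma DeltaI_uvec (f : 'rV[F]_n -> F) : (forall y, f y = peval c y) ->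
  DeltaI I f (uvec I x) = \sum_e c e * reduced_monomial e.
Proof.
move=> hc; rewrite /DeltaI
  (Deltas_sum (h := fun (e : expvec F n) y => \prod_i y ord0 i ^+ e i) _ hc).
apply: eq_bigr => e _; congr (_ * _).
rewrite (Deltas_prod (fun i t => t ^+ e i)) ?enum_uniq //.
apply: eq_bigr => i _; rewrite mem_enum !mxE.
by case: (i \in I); rewrite ?add0r ?expr1n ?subr_expr0n.
Qed.

Lemma fI_peval (f : 'rV[F]_n -> F) : (forall y, f y = peval c y) ->
  fI f I x = \sum_e c e * reduced_monomial e.
Proof.
move=> hc; rewrite /fI.
under eq_bigr => J _ do rewrite hc /peval mulr_sumr.
rewrite exchange_big /=; apply: eq_bigr => e _.
under eq_bigr => J _ do rewrite mulrCA.
rewrite -mulr_sumr /reduced_monomial; congr (_ * _).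
under [RHS]eq_bigr => i _ do rewrite -subr_expr0n.
rewrite -(sum_powerset_signed_prod (fun i => 0 ^+ e i)
                                    (fun i => x ord0 i ^+ e i)).
apply: eq_bigr => J _; congr (_ * _); apply: eq_bigr => i _.
by rewrite !mxE; case: (i \in I); case: (i \in J); rewrite ?expr1n.
Qed.

Lemma fS_vvec : fS c I (vvec I x) = \sum_e c e * reduced_monomial e.
Proof.
rewrite /fS big_mkcond; apply: eq_bigr => e _.
case: forallP => [e_pos | /forallP].
  congr (_ * _); apply: eq_bigr => i _; rewrite !mxE.
  case iI: (i \in I); last by rewrite subn0.
  by have := e_pos i; rewrite iI /= => ->; rewrite expr1n.
rewrite negb_forall => /existsP[i].
rewrite negb_imply -eqn0Ngt => /andP[iI /eqP ei0].
by rewrite /reduced_monomial (bigD1 i) //= iI ei0 mul0r mulr0.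
Qed.

End MonomialExpansion.

Theorem mainTheorem3 (F : finFieldType) (n : nat) (f : 'rV[F]_n -> F)
  (c : {ffun expvec F n -> F}) (hc : forall x, f x = peval c x)
  (I : {set 'I_n}) (x : 'rV[F]_n) :
  fI f I x = DeltaI I f (uvec I x) /\ DeltaI I f (uvec I x) = fS c I (vvec I x).
Proof. by rewrite (fI_peval I x hc) (DeltaI_uvec I x hc) fS_vvec. Qed.
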